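(* Let $S=\operatorname{FInv}\langle X\mid R\rangle$ with $R$ a symmetric relation on $\mathbb{I}\mathfrak{m}_X$, and let $\Gamma_X$ be the Cayley graph of its greatest group image $G$. Then for every term $w\in\mathbb{I}\mathfrak{m}_X$, the $F$-Schützenberger graph $F\Gamma(w)$ equals $\langle\overline w\rangle^{c_R}$, the smallest $c_R$-closed subgraph of $\Gamma_X$ containing $\langle\overline w\rangle$. Furthermore $F\Gamma(w)=\bigcup_{i\ge0}\Delta_i$, where $\Delta_0=\langle\overline w\rangle$ and $\Delta_{i+1}$ is the full $P$-expansion of $\Delta_i$ with respect to $R$.
   Context: $\operatorname{FInv}\langle X\mid R\rangle$ is the quotient of the free $F$-inverse monoid on $X$ (signature $(\cdot,1,{}^{-1},{}^{\mathfrak m})$, $s^{\mathfrak m}$ the greatest element of the $\sigma$-class of $s$) by the congruence generated by $R$. $\mathbb{I}\mathfrak{m}_X$ is the set of terms $u_0v_1^{\mathfrak m}u_1\cdots v_n^{\mathfrak m}u_n$ ($u_i,v_i\in(X\cup X^{-1})^*$). $\Gamma_X$: vertices $G$, edge labeled $x$ from $g$ to $gx_G$ ($x\in X\cup X^{-1}$) with inverse edges; subgraphs closed under endpoints and inverses. The journey labeled $w$ from $g$ is $g\overline w=(g\overline{u_0},g(u_0v_1)_G\overline{u_1},\dots,g(u_0v_1\cdots u_{n-1}v_n)_G\overline{u_n})$, $h\overline u$ the path from $h$ labeled by word $u$, $\overline w=1\overline w$; $\langle g\overline w\rangle$ is the union of the subgraphs spanned by its paths; $w$ labels a journey in $\Delta$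 from $g$ to $h$ if $gw_G=h$ and $\langle g\overline w\rangle\subseteq\Delta$. For a symmetric relation $Q$ on $\mathbb{I}\mathfrak{m}_X$ with pairs equal in $G$, a subgraph $\Delta$ is $c_Q$-closed if for all $(u,v)\in Q$ and $g,h\in V(\Delta)$, $u$ labels a journey in $\Delta$ from $g$ to $h$ iff $v$ does, and $\Delta^{c_Q}$ is the intersection of the $c_Q$-closed subgraphs containing $\Delta$. $c_S=c_Q$ for $Q=\{(u,v):u_S=v_S\}$, and $F\Gamma(w)=\langle\overline w\rangle^{c_S}$. The full $P$-expansion of $\Delta$ with respect to $R$ is $\Delta\cup\bigcup\langle g\overline v\rangle$ over all $(u,v)\in R$, $g\in V(\Delta)$ with $\langle g\overline u\rangle\subseteq\Delta$. *)

From Stdlib Require Import List ClassicalEpsilon.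
Import ListNotations.

Section Terms.
Context {X : Type}.

(* a letter of X ∪ X^{-1}: (x,false) = x, (x,true) = x^{-1} *)
Definition letter : Type := (X * bool)%type.
Definition word : Type := list letter.
Definition linv (a : letter) : letter := (fst a, negb (snd a)).

(* terms of the full signature (·, 1, ^{-1}, ^m) over X *)
Inductive fterm : Type :=
| FVar (x : X) | FOne | FMul (a b : fterm) | FInv (a : fterm) | FM (a : fterm).

(* an element u0 v1^m u1 ... vn^m un of Im_X :
   im_head = u0, im_tail = [(v1,u1); ...; (vn,un)] *)
Record imterm : Type := IM { im_head : word; im_tail : list (word * word) }.

Definition lterm (a : letter) : fterm :=
  if snd a then FInv (FVar (fst a)) else FVar (fst a).
Fixpoint wterm (u : word) : fterm :=
  match u with [] => FOne | a :: u' => FMul (lterm a) (wterm u') end.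
Fixpoint tail_term (acc : fterm) (t : list (word * word)) : fterm :=
  match t with
  | [] => acc
  | (v, u) :: t' => tail_term (FMul (FMul acc (FM (wterm v))) (wterm u)) t'
  end.
Definition imterm_term (w : imterm) : fterm := tail_term (wterm (im_head w)) (im_tail w).
End Terms.
Arguments letter : clear implicits.
Arguments word : clear implicits.
Arguments fterm : clear implicits.
Arguments imterm : clear implicits.

Record FInvMonoid : Type := {
  car :> Type;
  fmul : car -> car -> car;
  fone : car;
  finv : car -> car;
  fmx  : car -> car;
  fmulA : forall a b c, fmul a (fmul b c) = fmul (fmul a b) c;
  fmul1l : forall a, fmul fone a = a;
  fmul1r : forall a, fmul a fone = a;
  finv_reg1 : forall a, fmul (fmul a (finv a)) a = a;
  finv_reg2 : forall a, fmul (fmul (finv a) a) (finv a) = finv a;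
  fidem_comm : forall e f, fmul e e = e -> fmul f f = f -> fmul e f = fmul f e;
  (* s^m is the greatest element (natural order) of the sigma-class of s *)
  fmx_sigma : forall a, exists e, fmul e e = e /\ fmul e a = fmul e (fmx a);
  fmx_max : forall a b, (exists e, fmul e e = e /\ fmul e a = fmul e b) ->
                        exists e, fmul e e = e /\ b = fmul e (fmx a)
}.

Fixpoint eval {X : Type} (M : FInvMonoid) (f : X -> car M) (t : fterm X) : car M :=
  match t with
  | FVar x => f x
  | FOne => fone M
  | FMul a b => fmul M (eval M f a) (eval M f b)
  | FInv a => finv M (eval M f a)
  | FM a => fmx M (eval M f a)
  end.

Section Presentation.
Context {X : Type} (R : imterm X -> imterm X -> Prop).

(* equality in S = FInv<X|R>: the quotient of the free F-inverse monoid on X by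
   the congruence generated by R, i.e. equality in every F-inverse monoid under
   every assignment of X satisfying R *)
Definition SEq (a b : fterm X) : Prop :=
  forall (M : FInvMonoid) (f : X -> car M),
    (forall u v, R u v -> eval M f (imterm_term u) = eval M f (imterm_term v)) ->
    eval M f a = eval M f b.

Definition GEq (a b : fterm X) : Prop :=
  exists e, SEq (FMul e e) e /\ SEq (FMul e a) (FMul e b).

Definition Gimg : Type := { P : fterm X -> Prop | exists t, P = GEq t }.
Definition gcls (t : fterm X) : Gimg := exist _ (GEq t) (ex_intro _ t eq_refl).
Definition grep (g : Gimg) : fterm X :=
  proj1_sig (constructive_indefinite_description _ (proj2_sig g)).
Definition gact (g : Gimg) (t : fterm X) : Gimg := gcls (FMul (grep g) t).
Definition gone : Gimg := gcls FOne.
Definition gstep (g : Gimg) (a : letter X) : Gimg := gact g (lterm a).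

(* ---------- subgraphs of the Cayley graph Gamma_X ----------
   The edges of Gamma_X are the pairs (g,a), a in X ∪ X^{-1}: the edge labelled a
   from g to g a_G; its inverse edge is (g a_G, a^{-1}). *)
Record subgraph : Type := SG { sgV : Gimg -> Prop; sgE : Gimg -> letter X -> Prop }.

Definition is_subgraph (D : subgraph) : Prop :=
  forall g a, sgE D g a -> sgV D g /\ sgV D (gstep g a) /\ sgE D (gstep g a) (linv a).

Definition sg_sub (D1 D2 : subgraph) : Prop :=
  (forall g, sgV D1 g -> sgV D2 g) /\ (forall g a, sgE D1 g a -> sgE D2 g a).
Definition sg_eq (D1 D2 : subgraph) : Prop := sg_sub D1 D2 /\ sg_sub D2 D1.

Definition sg_union (D1 D2 : subgraph) : subgraph :=
  SG (fun g => sgV D1 g \/ sgV D2 g) (fun g a => sgE D1 g a \/ sgE D2 g a).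
Definition sg_empty : subgraph := SG (fun _ => False) (fun _ _ => False).
Definition sg_bigunion (F : nat -> subgraph) : subgraph :=
  SG (fun g => exists i, sgV (F i) g) (fun g a => exists i, sgE (F i) g a).

Definition gen_sg (V0 : Gimg -> Prop) (E0 : Gimg -> letter X -> Prop) : subgraph :=
  SG (fun g => forall D, is_subgraph D -> (forall h, V0 h -> sgV D h) ->
                 (forall h b, E0 h b -> sgE D h b) -> sgV D g)
     (fun g a => forall D, is_subgraph D -> (forall h, V0 h -> sgV D h) ->
                 (forall h b, E0 h b -> sgE D h b) -> sgE D g a).

Fixpoint pathV (h : Gimg) (u : word X) (g : Gimg) : Prop :=
  match u with [] => g = h | a :: u' => g = h \/ pathV (gstep h a) u' g end.
Fixpoint pathE (h : Gimg) (u : word X) (g : Gimg) (b : letter X) : Prop :=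
  match u with [] => False | a :: u' => (g = h /\ b = a) \/ pathE (gstep h a) u' g b end.
Definition path_sg (h : Gimg) (u : word X) : subgraph := gen_sg (pathV h u) (pathE h u).

(* <g w-bar>: union of the subgraphs spanned by the paths
   g(u0 v1 ... u_{i-1} v_i)_G u_i-bar ; acc = u0 v1 ... u_{i-1} v_i *)
Fixpoint jsp (g : Gimg) (acc u : word X) (t : list (word X * word X)) : subgraph :=
  sg_union (path_sg (gact g (wterm acc)) u)
    (match t with
     | [] => sg_empty
     | (v, u') :: t' => jsp g (acc ++ u ++ v) u' t'
     end).
Definition journey_sg (g : Gimg) (w : imterm X) : subgraph :=
  jsp g [] (im_head w) (im_tail w).

Definition labels_journey (D : subgraph) (w : imterm X) (g h : Gimg) : Prop :=
  gact g (imterm_term w) = h /\ sg_sub (journey_sg g w) D.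

Definition cQ_closed (Q : imterm X -> imterm X -> Prop) (D : subgraph) : Prop :=
  forall u v g h, Q u v -> sgV D g -> sgV D h ->
    (labels_journey D u g h <-> labels_journey D v g h).

Definition cQ_closure (Q : imterm X -> imterm X -> Prop) (D : subgraph) : subgraph :=
  SG (fun g => forall D', is_subgraph D' -> cQ_closed Q D' -> sg_sub D D' -> sgV D' g)
     (fun g a => forall D', is_subgraph D' -> cQ_closed Q D' -> sg_sub D D' -> sgE D' g a).

Definition QS (u v : imterm X) : Prop := SEq (imterm_term u) (imterm_term v).

Definition wbar (w : imterm X) : subgraph := journey_sg gone w.

Definition FGamma (w : imterm X) : subgraph := cQ_closure QS (wbar w).

Definition P_expansion (D : subgraph) : subgraph :=
  SG (fun g => sgV D g \/ exists u v h, R u v /\ sgV D h /\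
                 sg_sub (journey_sg h u) D /\ sgV (journey_sg h v) g)
     (fun g a => sgE D g a \/ exists u v h, R u v /\ sgV D h /\
                 sg_sub (journey_sg h u) D /\ sgE (journey_sg h v) g a).

Fixpoint Delta (w : imterm X) (n : nat) : subgraph :=
  match n with O => wbar w | S n' => P_expansion (Delta w n') end.

End Presentation.

(* Every c_S-closed subgraph is c_R-closed, since u_S = v_S for (u, v) in R.  Conversely, a
   subgraph D of Gamma_X carries an F-inverse monoid of partial right translations (A, g) with
   A and A g inside V(D), multiplied as (A, g)(B, h) = (A ∩ B g^-1, g h); the maximum of the
   sigma-class of g is (V(D) ∩ V(D) g^-1, g).  Sending x to (tails of x-edges of D, x_G), each
   w in Im_X evaluates to (vertices from which w labels a journey in D, w_G).  If D is c_R-closed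
   this assignment satisfies R, hence every relation of S, so D is c_S-closed; thus c_R and c_S
   have the same closed subgraphs.
   The union of the Delta_i lies in every c_R-closed subgraph containing <w-bar> (induction on
   i), and is itself c_R-closed: a journey in it already lies in some Delta_N, so an R-related
   journey from the same vertex lies in Delta_(N+1). *)

From Stdlib Require Import List ClassicalEpsilon FunctionalExtensionality PropExtensionality.
From Stdlib Require Import ProofIrrelevance Lia.
Import ListNotations.

Section FInvMonoidFacts.
Variable M : FInvMonoid.
Local Notation "a ** b" := (fmul M a b) (at level 40, left associativity).
Local Notation "a ^-" := (finv M a) (at level 20).

Lemma mulV_idem (a : M) : (a ** a^-) ** (a ** a^-) = a ** a^-.
Proof. rewrite fmulA, finv_reg1. reflexivity. Qed.

Lemma Vmul_idem (a : M) : (a^- ** a) ** (a^- ** a) = a^- ** a.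
Proof. rewrite fmulA, finv_reg2. reflexivity. Qed.

(* a^m lies above a in the natural order, so a a^- a^m = a a^- a. *)
Lemma mulV_mx (a : M) : a ** a^- ** fmx M a = a.
Proof.
  destruct (fmx_max M a a) as [e [He Ha]].
  { exists (fone M). split; [apply fmul1l | reflexivity]. }
  assert (Hea : e ** a = a) by (rewrite Ha, fmulA, He; reflexivity).
  assert (E : a ** a^- = a ** a^- ** e).
  { rewrite (fidem_comm M (a ** a^-) e (mulV_idem a) He), fmulA, Hea. reflexivity. }
  rewrite E, <- (fmulA M _ e), <- Ha, finv_reg1. reflexivity.
Qed.

Lemma conj_mul (a e b : M) : e ** e = e -> (a ** e ** a^-) ** (a ** b) = a ** (e ** b).
Proof.
  intro He.
  replace ((a ** e ** a^-) ** (a ** b)) with (a ** (e ** (a^- ** a)) ** b)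
    by (rewrite !fmulA; reflexivity).
  rewrite (fidem_comm M e (a^- ** a) He (Vmul_idem a)).
  replace (a ** (a^- ** a ** e) ** b) with ((a ** a^- ** a) ** (e ** b))
    by (rewrite !fmulA; reflexivity).
  rewrite finv_reg1. reflexivity.
Qed.

Lemma conj_idem (a e : M) : e ** e = e -> (a ** e ** a^-) ** (a ** e ** a^-) = a ** e ** a^-.
Proof.
  intro He. rewrite <- (fmulA M a e (a^-)) at 2.
  rewrite conj_mul, !fmulA, <- (fmulA M a e e), He by exact He. reflexivity.
Qed.

Lemma eval_tail_term_mul (X : Type) (f : X -> car M) a b t :
  eval M f (tail_term (FMul a b) t) = eval M f a ** eval M f (tail_term b t).
Proof.
  revert a b. induction t as [|[v u] t IH]; intros a b; simpl; [reflexivity|].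
  rewrite !IH. simpl. rewrite !fmulA. reflexivity.
Qed.

End FInvMonoidFacts.

Section GroupImage.
Variables (X : Type) (R : imterm X -> imterm X -> Prop).

Lemma SEq_refl a : SEq R a a.
Proof. intros M f _. reflexivity. Qed.

Lemma SEq_sym a b : SEq R a b -> SEq R b a.
Proof. intros H M f HR. symmetry. apply H, HR. Qed.

Lemma SEq_GEq a b : SEq R a b -> GEq R a b.
Proof.
  intros H. exists FOne. split; intros M f HR; simpl.
  - apply fmul1l.
  - rewrite !fmul1l. apply H, HR.
Qed.

Lemma GEq_refl a : GEq R a a.
Proof. apply SEq_GEq, SEq_refl. Qed.

Lemma GEq_sym a b : GEq R a b -> GEq R b a.
Proof. intros [e [He Hab]]. exists e. split; [exact He | apply SEq_sym, Hab]. Qed.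

(* The witnessing idempotents multiply: e1 e2 is again idempotent since idempotents commute. *)
Lemma GEq_trans a b c : GEq R a b -> GEq R b c -> GEq R a c.
Proof.
  intros [e1 [H1 H2]] [e2 [H3 H4]]. exists (FMul e1 e2).
  split; intros M f HR; simpl;
    specialize (H1 M f HR); specialize (H2 M f HR);
    specialize (H3 M f HR); specialize (H4 M f HR); simpl in *.
  - set (x := eval M f e1) in *; set (y := eval M f e2) in *.
    rewrite <- (fmulA M x y), (fmulA M y x), <- (fidem_comm M x y H1 H3),
      <- !fmulA, H3, fmulA, H1. reflexivity.
  - rewrite (fidem_comm M _ _ H1 H3), <- fmulA, H2, fmulA, <- (fidem_comm M _ _ H1 H3),
      <- fmulA, H4, fmulA. reflexivity.
Qed.

Lemma GEq_mulr a a' b : GEq R a a' -> GEq R (FMul a b) (FMul a' b).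
Proof.
  intros [e [He Ha]]. exists e. split; [exact He|]. intros M f HR.
  specialize (Ha M f HR). simpl in *. rewrite !fmulA, Ha. reflexivity.
Qed.

(* For left multiplication the witness e is conjugated to a e a^-1. *)
Lemma GEq_mull a b b' : GEq R b b' -> GEq R (FMul a b) (FMul a b').
Proof.
  intros [e [He Hb]]. exists (FMul (FMul a e) (FInv a)).
  split; intros M f HR; specialize (He M f HR); simpl in *.
  - apply conj_idem, He.
  - specialize (Hb M f HR). simpl in Hb. rewrite !conj_mul, Hb by exact He. reflexivity.
Qed.

Lemma GEq_mul a a' b b' : GEq R a a' -> GEq R b b' -> GEq R (FMul a b) (FMul a' b').
Proof. intros Ha Hb. eapply GEq_trans; [apply GEq_mulr, Ha | apply GEq_mull, Hb]. Qed.

Lemma GEq_mulV a : GEq R (FMul a (FInv a)) FOne.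
Proof.
  exists (FMul a (FInv a)). split; intros M f _; simpl.
  - apply mulV_idem.
  - rewrite fmul1r. apply mulV_idem.
Qed.

Lemma GEq_Vmul a : GEq R (FMul (FInv a) a) FOne.
Proof.
  exists (FMul (FInv a) a). split; intros M f _; simpl.
  - apply Vmul_idem.
  - rewrite fmul1r. apply Vmul_idem.
Qed.

Lemma GEq_mx a : GEq R (FM a) a.
Proof.
  exists (FMul a (FInv a)). split; intros M f _; simpl.
  - apply mulV_idem.
  - rewrite mulV_mx, finv_reg1. reflexivity.
Qed.

Lemma GEq_mulA a b c : GEq R (FMul a (FMul b c)) (FMul (FMul a b) c).
Proof. apply SEq_GEq. intros M f _. apply fmulA. Qed.

Lemma GEq_mul1l a : GEq R (FMul FOne a) a.
Proof. apply SEq_GEq. intros M f _. apply fmul1l. Qed.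

Lemma GEq_mul1r a : GEq R (FMul a FOne) a.
Proof. apply SEq_GEq. intros M f _. apply fmul1r. Qed.

(* a'^- ~ (a^- a) a'^- ~ a^- (a' a'^-) ~ a^- *)
Lemma GEq_inv a a' : GEq R a a' -> GEq R (FInv a) (FInv a').
Proof.
  intros H. apply GEq_sym.
  eapply GEq_trans; [apply GEq_sym, GEq_mul1l|].
  eapply GEq_trans; [apply GEq_mulr, GEq_sym, (GEq_Vmul a)|].
  eapply GEq_trans; [apply GEq_sym, GEq_mulA|].
  eapply GEq_trans; [apply GEq_mull, GEq_mulr, H|].
  eapply GEq_trans; [apply GEq_mull, GEq_mulV|].
  apply GEq_mul1r.
Qed.

Local Notation G := (Gimg R).

Lemma gcls_eq a b : GEq R a b -> gcls R a = gcls R b.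
Proof.
  intros H. unfold gcls.
  assert (E : GEq R a = GEq R b).
  { apply functional_extensionality; intro t. apply propositional_extensionality.
    split; apply GEq_trans; [apply GEq_sym|]; exact H. }
  generalize (ex_intro (fun t => GEq R a = GEq R t) a eq_refl).
  generalize (ex_intro (fun t => GEq R b = GEq R t) b eq_refl).
  rewrite E. intros e1 e2. f_equal. apply proof_irrelevance.
Qed.

Lemma gcls_inj a b : gcls R a = gcls R b -> GEq R a b.
Proof.
  intros H. apply (f_equal (@proj1_sig _ _)) in H. simpl in H.
  rewrite H. apply GEq_refl.
Qed.

Lemma grepK g : gcls R (grep R g) = g.
Proof.
  unfold grep. destruct (constructive_indefinite_description _ _) as [t Ht].
  destruct g as [P HP]. simpl in *. subst P. unfold gcls. f_equal. apply proof_irrelevance.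
Qed.

Lemma gcls_surj (g : G) : exists t, g = gcls R t.
Proof. exists (grep R g). symmetry. apply grepK. Qed.

Lemma grep_gcls t : GEq R (grep R (gcls R t)) t.
Proof. apply gcls_inj. rewrite grepK. reflexivity. Qed.

Definition gmul (g h : G) : G := gact R g (grep R h).
Definition ginv (g : G) : G := gcls R (FInv (grep R g)).

Lemma gact_cls a t : gact R (gcls R a) t = gcls R (FMul a t).
Proof. apply gcls_eq, GEq_mulr, grep_gcls. Qed.

Lemma gmul_cls a b : gmul (gcls R a) (gcls R b) = gcls R (FMul a b).
Proof. apply gcls_eq, GEq_mul; apply grep_gcls. Qed.

Lemma ginv_cls a : ginv (gcls R a) = gcls R (FInv a).
Proof. apply gcls_eq, GEq_inv, grep_gcls. Qed.

Lemma gact_gmul g t : gact R g t = gmul g (gcls R t).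
Proof. destruct (gcls_surj g) as [a ->]. rewrite gact_cls, gmul_cls. reflexivity. Qed.

Ltac gcls_elim := repeat match goal with
  g : G |- _ => let t := fresh "t" in destruct (gcls_surj g) as [t ->]; clear g end.

Lemma gmulA g h k : gmul (gmul g h) k = gmul g (gmul h k).
Proof. gcls_elim. rewrite !gmul_cls. apply gcls_eq, GEq_sym, GEq_mulA. Qed.

Lemma gmul1g g : gmul (gone R) g = g.
Proof. gcls_elim. apply (eq_trans (gmul_cls _ _)), gcls_eq, GEq_mul1l. Qed.

Lemma gmulg1 g : gmul g (gone R) = g.
Proof. gcls_elim. apply (eq_trans (gmul_cls _ _)), gcls_eq, GEq_mul1r. Qed.

Lemma gmulgV g : gmul g (ginv g) = gone R.
Proof. gcls_elim. rewrite ginv_cls, gmul_cls. apply gcls_eq, GEq_mulV. Qed.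

Lemma gmulVg g : gmul (ginv g) g = gone R.
Proof. gcls_elim. rewrite ginv_cls, gmul_cls. apply gcls_eq, GEq_Vmul. Qed.

Lemma gmulgK g h : gmul (gmul g h) (ginv h) = g.
Proof. rewrite gmulA, gmulgV, gmulg1. reflexivity. Qed.

Lemma gmulgVK g h : gmul (gmul g (ginv h)) h = g.
Proof. rewrite gmulA, gmulVg, gmulg1. reflexivity. Qed.

Lemma gmul_idem g : gmul g g = g -> g = gone R.
Proof. intros H. rewrite <- (gmulgV g). rewrite <- H at 2. rewrite gmulgK. reflexivity. Qed.

Lemma gact_gact g s t : gact R (gact R g s) t = gact R g (FMul s t).
Proof. rewrite !gact_gmul, gmulA, gmul_cls. reflexivity. Qed.

Lemma gact_one g : gact R g FOne = g.
Proof. rewrite gact_gmul. apply gmulg1. Qed.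

Lemma gact_cong g s t : GEq R s t -> gact R g s = gact R g t.
Proof. intros H. rewrite !gact_gmul, (gcls_eq _ _ H). reflexivity. Qed.

Lemma gact_R g u v : R u v -> gact R g (imterm_term u) = gact R g (imterm_term v).
Proof. intros H. apply gact_cong, SEq_GEq. intros M f HR. apply HR, H. Qed.

End GroupImage.
Arguments gmul {X} R g h.
Arguments ginv {X} R g.

Section Journeys.
Variables (X : Type) (R : imterm X -> imterm X -> Prop).
Local Notation G := (Gimg R).
Local Notation V := (sgV R).
Local Notation E := (sgE R).

Fixpoint path_in (D : subgraph R) (h : G) (u : word X) : Prop :=
  match u with
  | [] => V D h
  | a :: u' => V D h /\ E D h a /\ path_in D (gstep R h a) u'
  end.

Fixpoint journey_in (D : subgraph R) (g : G) (acc u : word X) (t : list (word X * word X)) : Prop :=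
  path_in D (gact R g (wterm acc)) u /\
  match t with
  | [] => True
  | (v, u') :: t' => journey_in D g (acc ++ u ++ v) u' t'
  end.

Lemma sg_sub_refl D : sg_sub R D D.
Proof. split; auto. Qed.

Lemma sg_sub_trans A B C : sg_sub R A B -> sg_sub R B C -> sg_sub R A C.
Proof. intros [H1 H2] [H3 H4]. split; auto. Qed.

Lemma sg_union_sub A B D : sg_sub R (sg_union R A B) D <-> sg_sub R A D /\ sg_sub R B D.
Proof.
  split.
  - intros [HV HE]. split; split; intros; [apply HV | apply HE | apply HV | apply HE];
      simpl; auto.
  - intros [[H1 H2] [H3 H4]]. split; [intros ? [] | intros ? ? []]; auto.
Qed.

Lemma sg_union_is_subgraph A B :
  is_subgraph R A -> is_subgraph R B -> is_subgraph R (sg_union R A B).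
Proof.
  intros HA HB g a [H | H]; simpl;
    [destruct (HA g a H) as [? []] | destruct (HB g a H) as [? []]]; auto.
Qed.

Lemma sg_empty_is_subgraph : is_subgraph R (sg_empty R).
Proof. intros g a []. Qed.

Lemma gen_sg_is_subgraph V0 E0 : is_subgraph R (gen_sg R V0 E0).
Proof.
  intros g a H. simpl in *.
  repeat split; intros D HD H1 H2; apply (HD g a); auto.
Qed.

Lemma gen_sg_sub D V0 E0 : is_subgraph R D -> (forall h, V0 h -> V D h) ->
  (forall h b, E0 h b -> E D h b) -> sg_sub R (gen_sg R V0 E0) D.
Proof. intros HD H1 H2. split; intros g; simpl; auto. Qed.

Lemma path_sg_sub D h u : is_subgraph R D -> (sg_sub R (path_sg R h u) D <-> path_in D h u).
Proof.
  intros HD. split.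
  - intros [H1 H2].
    assert (HV : forall g, pathV R h u g -> V D g)
      by (intros g Hg; apply H1; simpl; auto).
    assert (HE : forall g b, pathE R h u g b -> E D g b)
      by (intros g b Hg; apply H2; simpl; auto).
    clear H1 H2. revert h HV HE. induction u as [|a u IH]; intros h HV HE; simpl in *.
    + apply HV. reflexivity.
    + repeat split; [apply HV; auto | apply HE; auto |].
      apply IH; intros; [apply HV | apply HE]; auto.
  - intros H. apply gen_sg_sub; [exact HD | |]; revert h H;
      induction u as [|a u IH]; simpl; intros h H.
    + intros g ->. exact H.
    + intros g [-> | Hg]; [apply H | apply (IH _ (proj2 (proj2 H)) g Hg)].
    + intros g b [].
    + intros g b [[-> ->] | Hg]; [apply H | apply (IH _ (proj2 (proj2 H)) g b Hg)].
Qed.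

Lemma jsp_sub D g acc u t :
  is_subgraph R D -> (sg_sub R (jsp R g acc u t) D <-> journey_in D g acc u t).
Proof.
  intros HD. revert acc u. induction t as [|[v u'] t IH]; intros acc u;
    simpl jsp; simpl journey_in; rewrite sg_union_sub, path_sg_sub by exact HD.
  - split; [tauto|]. intros [H _]. split; [exact H|]. split; [intros ? [] | intros ? ? []].
  - rewrite IH. reflexivity.
Qed.

Lemma journey_sg_is_subgraph g w : is_subgraph R (journey_sg R g w).
Proof.
  unfold journey_sg. generalize (@nil (letter X)) (im_head w).
  induction (im_tail w) as [|[v u'] t IH]; intros acc u; simpl;
    apply sg_union_is_subgraph; try apply gen_sg_is_subgraph; auto.
  apply sg_empty_is_subgraph.
Qed.

Lemma path_in_mono D1 D2 h u : sg_sub R D1 D2 -> path_in D1 h u -> path_in D2 h u.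
Proof. intros [H1 H2]. revert h. induction u; simpl; intuition. Qed.

Lemma journey_in_mono D1 D2 g acc u t :
  sg_sub R D1 D2 -> journey_in D1 g acc u t -> journey_in D2 g acc u t.
Proof.
  intros H. revert acc u. induction t as [|[v u'] t IH]; simpl; intros acc u [H1 H2];
    split; eauto using path_in_mono.
Qed.

Lemma path_in_end D h u : path_in D h u -> V D (gact R h (wterm u)).
Proof.
  revert h. induction u as [|a u IH]; simpl; intros h H.
  - rewrite gact_one. exact H.
  - rewrite <- gact_gact. apply IH, H.
Qed.

Lemma wterm_cat u u' : GEq R (wterm (u ++ u')) (FMul (wterm u) (wterm u')).
Proof.
  apply SEq_GEq. intros M f _. induction u as [|a u IH]; simpl.
  - rewrite fmul1l. reflexivity.
  - rewrite IH. apply fmulA.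
Qed.

Lemma journey_in_shift D g g' acc acc' u t :
  gact R g (wterm acc) = gact R g' (wterm acc') ->
  (journey_in D g acc u t <-> journey_in D g' acc' u t).
Proof.
  revert acc acc' u. induction t as [|[v u'] t IH]; intros acc acc' u He; simpl.
  - rewrite He. reflexivity.
  - rewrite He, (IH (acc ++ u ++ v) (acc' ++ u ++ v)); [reflexivity|].
    rewrite !(gact_cong _ _ _ _ _ (wterm_cat _ _)), <- !gact_gact, He. reflexivity.
Qed.

Lemma journey_in_cons D g u0 v u1 t :
  journey_in D g [] u0 ((v, u1) :: t) <->
  path_in D g u0 /\ journey_in D (gact R g (wterm (u0 ++ v))) [] u1 t.
Proof.
  simpl. rewrite gact_one, (journey_in_shift D g (gact R g (wterm (u0 ++ v))) (u0 ++ v) []);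
    [reflexivity|].
  simpl. rewrite gact_one. reflexivity.
Qed.

End Journeys.
Arguments path_in {X} R D h u.
Arguments journey_in {X} R D g acc u t.

Section PartialTranslations.
Variables (X : Type) (R : imterm X -> imterm X -> Prop).
Local Notation G := (Gimg R).
Local Notation V := (sgV R).
Local Notation E := (sgE R).
Variable D : subgraph R.
Hypothesis HD : is_subgraph R D.

(* A pair (A, g) stands for the partial map y |-> y g of V(D) with domain A. *)
Record ptrans := PTrans {
  pt_dom : G -> Prop;
  pt_shift : G;
  pt_dom_in : forall y, pt_dom y -> V D y /\ V D (gmul R y pt_shift) }.

Lemma ptrans_ext (a b : ptrans) :
  (forall y, pt_dom a y <-> pt_dom b y) -> pt_shift a = pt_shift b -> a = b.
Proof.
  destruct a as [A g P], b as [B h Q]; simpl; intros HAB Hgh.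
  assert (A = B)
    by (apply functional_extensionality; intro; apply propositional_extensionality, HAB).
  subst. f_equal. apply proof_irrelevance.
Qed.

Program Definition pt_mul (a b : ptrans) : ptrans :=
  PTrans (fun y => pt_dom a y /\ pt_dom b (gmul R y (pt_shift a)))
    (gmul R (pt_shift a) (pt_shift b)) _.
Next Obligation.
  split; [apply (pt_dom_in a y H) |].
  rewrite <- gmulA. apply (pt_dom_in b _ H0).
Qed.

Program Definition pt_one : ptrans := PTrans (V D) (gone R) _.
Next Obligation. rewrite gmulg1. auto. Qed.

Program Definition pt_inv (a : ptrans) : ptrans :=
  PTrans (fun y => pt_dom a (gmul R y (ginv R (pt_shift a)))) (ginv R (pt_shift a)) _.
Next Obligation.
  destruct (pt_dom_in a _ H) as [H1 H2]. rewrite gmulgVK in H2. auto.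
Qed.

(* The greatest element of the sigma-class of shift g: the whole domain of y |-> y g. *)
Program Definition pt_mx (a : ptrans) : ptrans :=
  PTrans (fun y => V D y /\ V D (gmul R y (pt_shift a))) (pt_shift a) _.

Program Definition pt_id_on (b : ptrans) : ptrans := PTrans (pt_dom b) (gone R) _.
Next Obligation. rewrite gmulg1. destruct (pt_dom_in b y H); auto. Qed.

Lemma pt_mulA a b c : pt_mul a (pt_mul b c) = pt_mul (pt_mul a b) c.
Proof.
  apply ptrans_ext; simpl; [|symmetry; apply gmulA].
  intro y. rewrite gmulA. tauto.
Qed.

Lemma pt_mul1l a : pt_mul pt_one a = a.
Proof.
  apply ptrans_ext; simpl; [|apply gmul1g].
  intro y. rewrite gmulg1. split; [tauto|]. intro H. split; [apply (pt_dom_in a y H) | exact H].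
Qed.

Lemma pt_mul1r a : pt_mul a pt_one = a.
Proof.
  apply ptrans_ext; simpl; [|apply gmulg1].
  intro y. split; [tauto|]. intro H. split; [exact H | apply (pt_dom_in a y H)].
Qed.

Lemma pt_reg1 a : pt_mul (pt_mul a (pt_inv a)) a = a.
Proof.
  apply ptrans_ext; simpl.
  - intro y. rewrite gmulgK, gmulgV, gmulg1. tauto.
  - rewrite gmulgV, gmul1g. reflexivity.
Qed.

Lemma pt_reg2 a : pt_mul (pt_mul (pt_inv a) a) (pt_inv a) = pt_inv a.
Proof.
  apply ptrans_ext; simpl.
  - intro y. rewrite gmulVg, gmulg1. tauto.
  - rewrite gmulVg, gmul1g. reflexivity.
Qed.

Lemma pt_idem_shift e : pt_mul e e = e -> pt_shift e = gone R.
Proof. intros H. apply gmul_idem. exact (f_equal pt_shift H). Qed.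

Lemma pt_idem_comm e f : pt_mul e e = e -> pt_mul f f = f -> pt_mul e f = pt_mul f e.
Proof.
  intros He Hf. apply pt_idem_shift in He. apply pt_idem_shift in Hf.
  apply ptrans_ext; simpl; rewrite He, Hf; [|reflexivity].
  intro y. rewrite gmulg1. tauto.
Qed.

Program Definition pt_zero : ptrans := PTrans (fun _ => False) (gone R) _.
Next Obligation. tauto. Qed.

Lemma pt_mx_sigma a : exists e, pt_mul e e = e /\ pt_mul e a = pt_mul e (pt_mx a).
Proof.
  exists pt_zero. split; apply ptrans_ext; simpl; try tauto; apply gmul1g.
Qed.

Lemma pt_mx_max a b : (exists e, pt_mul e e = e /\ pt_mul e a = pt_mul e b) ->
  exists e, pt_mul e e = e /\ b = pt_mul e (pt_mx a).
Proof.
  intros [e [He Hab]].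
  assert (Hshift : pt_shift a = pt_shift b).
  { apply (f_equal pt_shift) in Hab. simpl in Hab.
    rewrite (pt_idem_shift e He), !gmul1g in Hab. exact Hab. }
  exists (pt_id_on b). split; apply ptrans_ext; simpl.
  - intro y. rewrite gmulg1. tauto.
  - apply gmul1g.
  - intro y. rewrite gmulg1, Hshift. split; [|tauto].
    intro H. destruct (pt_dom_in b y H). tauto.
  - rewrite gmul1g. symmetry. exact Hshift.
Qed.

Definition ptrans_monoid : FInvMonoid :=
  {| car := ptrans; fmul := pt_mul; fone := pt_one; finv := pt_inv; fmx := pt_mx;
     fmulA := pt_mulA; fmul1l := pt_mul1l; fmul1r := pt_mul1r;
     finv_reg1 := pt_reg1; finv_reg2 := pt_reg2; fidem_comm := pt_idem_comm;
     fmx_sigma := pt_mx_sigma; fmx_max := pt_mx_max |}.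

Program Definition pt_gen (x : X) : ptrans :=
  PTrans (fun y => E D y (x, false)) (gcls R (FVar x)) _.
Next Obligation.
  destruct (HD _ _ H) as [H1 [H2 _]]. rewrite <- gact_gmul. auto.
Qed.

Local Notation pt_eval := (eval ptrans_monoid pt_gen).

Lemma pt_shift_eval t : pt_shift (pt_eval t) = gcls R t.
Proof.
  induction t; simpl; try reflexivity.
  - rewrite IHt1, IHt2, gmul_cls. reflexivity.
  - rewrite IHt, ginv_cls. reflexivity.
  - rewrite IHt. apply gcls_eq, GEq_sym, GEq_mx.
Qed.

Lemma pt_dom_letter a y : pt_dom (pt_eval (lterm a)) y <-> E D y a.
Proof.
  destruct a as [x []]; unfold lterm; cbn; [|reflexivity].
  rewrite ginv_cls, <- gact_gmul. split; intro H; destruct (HD _ _ H) as [_ [_ H3]].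
  - unfold gstep in H3. rewrite gact_gact, (gact_cong _ _ _ _ _ (GEq_Vmul _ _ _)), gact_one in H3.
    exact H3.
  - exact H3.
Qed.

Lemma pt_dom_word u y : pt_dom (pt_eval (wterm u)) y <-> path_in R D y u.
Proof.
  revert y. induction u as [|a u IH]; intro y; [reflexivity|].
  change (pt_dom (pt_eval (lterm a)) y /\
          pt_dom (pt_eval (wterm u)) (gmul R y (pt_shift (pt_eval (lterm a))))
          <-> path_in R D (y) (a :: u)).
  rewrite pt_dom_letter, pt_shift_eval, <- gact_gmul, IH. simpl.
  split; [| tauto]. intros [H1 H2]. repeat split; auto. apply (HD _ _ H1).
Qed.

Lemma pt_dom_journey w y : pt_dom (pt_eval (imterm_term w)) y <-> sg_sub R (journey_sg R y w) D.
Proof.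
  destruct w as [u0 t]. unfold journey_sg. simpl. rewrite jsp_sub by exact HD.
  revert u0 y. induction t as [|[v u1] t IH]; intros u0 y.
  - unfold imterm_term. simpl. rewrite pt_dom_word, gact_one. tauto.
  - rewrite journey_in_cons, <- IH.
    change (imterm_term (IM u0 ((v, u1) :: t)))
      with (tail_term (FMul (FMul (wterm u0) (FM (wterm v))) (wterm u1)) t).
    rewrite eval_tail_term_mul. change (tail_term (wterm u1) t) with (imterm_term (IM u1 t)).
    change (pt_eval (FMul (wterm u0) (FM (wterm v))))
      with (pt_mul (pt_eval (wterm u0)) (pt_mx (pt_eval (wterm v)))).
    change (pt_dom (pt_mul ?a ?b) y) with (pt_dom a y /\ pt_dom b (gmul R y (pt_shift a))).
    simpl pt_dom. simpl pt_shift. rewrite pt_dom_word, !pt_shift_eval.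
    rewrite <- gmulA, <- !gact_gmul, gact_gact, <- (gact_cong _ _ _ _ _ (wterm_cat _ _ u0 v)).
    split; [tauto|]. intros [Hu0 Hrest].
    repeat split;
      [exact Hu0 | exact (path_in_end _ _ _ _ _ Hu0) | apply (pt_dom_in _ _ Hrest) | exact Hrest].
Qed.

End PartialTranslations.

Section Closures.
Variables (X : Type) (R : imterm X -> imterm X -> Prop).
Local Notation V := (sgV R).

Lemma sg_eq_sym A B : sg_eq R A B -> sg_eq R B A.
Proof. intros [H1 H2]. split; assumption. Qed.

Lemma sg_eq_trans A B C : sg_eq R A B -> sg_eq R B C -> sg_eq R A C.
Proof. intros [H1 H2] [H3 H4]. split; eapply sg_sub_trans; eassumption. Qed.

Lemma cQ_closure_least Q D D' : is_subgraph R D' -> cQ_closed R Q D' -> sg_sub R D D' ->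
  sg_sub R (cQ_closure R Q D) D'.
Proof. intros HD' Hc Hsub. split; simpl; auto. Qed.

Lemma sub_cQ_closure Q D B :
  (forall D', is_subgraph R D' -> cQ_closed R Q D' -> sg_sub R D D' -> sg_sub R B D') ->
  sg_sub R B (cQ_closure R Q D).
Proof. intros H. split; simpl; intros; apply H; auto. Qed.

Lemma cQ_closure_ext Q1 Q2 D :
  (forall D', is_subgraph R D' -> (cQ_closed R Q1 D' <-> cQ_closed R Q2 D')) ->
  sg_eq R (cQ_closure R Q1 D) (cQ_closure R Q2 D).
Proof.
  intros H. split; apply sub_cQ_closure; intros D' HD' Hc Hsub;
    apply cQ_closure_least; auto; apply H; auto.
Qed.

Section InSubgraph.
Variable D : subgraph R.
Hypothesis HD : is_subgraph R D.

Lemma journey_sg_sub_start g w : sg_sub R (journey_sg R g w) D -> V D g.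
Proof. rewrite <- (pt_dom_journey _ _ D HD). intros H. apply (pt_dom_in _ _ _ _ _ H). Qed.

Lemma journey_sg_sub_end g w : sg_sub R (journey_sg R g w) D -> V D (gact R g (imterm_term w)).
Proof.
  rewrite <- (pt_dom_journey _ _ D HD). intros H.
  pose proof (proj2 (pt_dom_in _ _ _ _ _ H)) as Hend.
  rewrite pt_shift_eval, <- gact_gmul in Hend. exact Hend.
Qed.

Lemma cQ_closed_journey Q u v g : cQ_closed R Q D -> Q u v ->
  gact R g (imterm_term u) = gact R g (imterm_term v) ->
  (sg_sub R (journey_sg R g u) D <-> sg_sub R (journey_sg R g v) D).
Proof.
  intros Hc HQ Heq. split; intro Hj.
  - apply (Hc u v g _ HQ (journey_sg_sub_start _ _ Hj) (journey_sg_sub_end _ _ Hj)).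
    split; [reflexivity | exact Hj].
  - assert (Hend := journey_sg_sub_end _ _ Hj). rewrite <- Heq in Hend.
    apply (Hc u v g _ HQ (journey_sg_sub_start _ _ Hj) Hend).
    split; [symmetry; exact Heq | exact Hj].
Qed.

Lemma cR_closed_cS_closed : cQ_closed R R D -> cQ_closed R (QS R) D.
Proof.
  intros Hc.
  assert (Hmodel : forall u v, R u v ->
    eval (ptrans_monoid X R D) (pt_gen X R D HD) (imterm_term u) =
    eval (ptrans_monoid X R D) (pt_gen X R D HD) (imterm_term v)).
  { intros u v Huv. apply ptrans_ext.
    - intro y. rewrite !pt_dom_journey. apply (cQ_closed_journey R); auto using gact_R.
    - rewrite !pt_shift_eval. apply gcls_eq, SEq_GEq. intros M f HR. apply HR, Huv. }
  intros u v g h HQ Vg Vh.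
  assert (Heq : gact R g (imterm_term u) = gact R g (imterm_term v))
    by (apply gact_cong, SEq_GEq, HQ).
  unfold labels_journey. rewrite Heq, <- !(pt_dom_journey _ _ D HD), (HQ _ _ Hmodel).
  reflexivity.
Qed.

Lemma cS_closed_cR_closed : cQ_closed R (QS R) D -> cQ_closed R R D.
Proof. intros Hc u v g h Huv. apply Hc. intros M f HR. apply HR, Huv. Qed.

End InSubgraph.

Lemma FGamma_cR_closure w : sg_eq R (FGamma R w) (cQ_closure R R (wbar R w)).
Proof.
  apply cQ_closure_ext. intros D HD.
  split; [apply cS_closed_cR_closed | apply cR_closed_cS_closed, HD].
Qed.

End Closures.

Section Chains.
Variables (X : Type) (R : imterm X -> imterm X -> Prop).
Variable F : nat -> subgraph R.
Hypothesis F_is_subgraph : forall n, is_subgraph R (F n).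
Hypothesis F_mono : forall n m, n <= m -> sg_sub R (F n) (F m).

Lemma bigunion_is_subgraph : is_subgraph R (sg_bigunion R F).
Proof.
  intros g a [i H]. destruct (F_is_subgraph i g a H) as [H1 [H2 H3]].
  split; [|split]; exists i; assumption.
Qed.

Lemma sub_bigunion n : sg_sub R (F n) (sg_bigunion R F).
Proof. split; simpl; eauto. Qed.

Lemma path_in_bigunion h u : path_in R (sg_bigunion R F) h u -> exists N, path_in R (F N) h u.
Proof.
  revert h. induction u as [|a u IH]; simpl; intros h H; [exact H|].
  destruct H as [[i1 H1] [[i2 H2] H3]]. destruct (IH _ H3) as [i3 H4].
  exists (i1 + i2 + i3). repeat split.
  - apply (F_mono i1); [lia | exact H1].
  - apply (F_mono i2); [lia | exact H2].
  - apply (path_in_mono _ _ (F i3)); [apply F_mono; lia | exact H4].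
Qed.

Lemma journey_in_bigunion g acc u t :
  journey_in R (sg_bigunion R F) g acc u t -> exists N, journey_in R (F N) g acc u t.
Proof.
  revert acc u. induction t as [|[v u'] t IH]; simpl; intros acc u [H1 H2].
  - destruct (path_in_bigunion _ _ H1) as [N HN]. exists N. split; auto.
  - destruct (path_in_bigunion _ _ H1) as [N1 HN1]. destruct (IH _ _ H2) as [N2 HN2].
    exists (N1 + N2). split.
    + apply (path_in_mono _ _ (F N1)); [apply F_mono; lia | exact HN1].
    + apply (journey_in_mono _ _ (F N2)); [apply F_mono; lia | exact HN2].
Qed.

(* Journeys are finite, so a journey in the union of a chain lies in one of its members. *)
Lemma journey_sg_bigunion g w :
  sg_sub R (journey_sg R g w) (sg_bigunion R F) -> exists N, sg_sub R (journey_sg R g w) (F N).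
Proof.
  unfold journey_sg. rewrite jsp_sub by apply bigunion_is_subgraph.
  intros H. destruct (journey_in_bigunion _ _ _ _ H) as [N HN].
  exists N. rewrite jsp_sub; [exact HN | apply F_is_subgraph].
Qed.

End Chains.

Section Expansion.
Variables (X : Type) (R : imterm X -> imterm X -> Prop).
Hypothesis Rsym : forall u v, R u v -> R v u.
Variable w : imterm X.
Local Notation Delta := (Delta R w).

Lemma P_expansion_is_subgraph D : is_subgraph R D -> is_subgraph R (P_expansion R D).
Proof.
  intros HD g a [H | [u [v [h [Huv [Vh [Hu Hv]]]]]]].
  - destruct (HD g a H) as [H1 [H2 H3]]. simpl. auto.
  - destruct (journey_sg_is_subgraph _ _ h v g a Hv) as [H1 [H2 H3]].
    split; [|split]; right; exists u, v, h; auto.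
Qed.

Lemma Delta_is_subgraph n : is_subgraph R (Delta n).
Proof.
  induction n as [|n IH]; [apply journey_sg_is_subgraph | apply P_expansion_is_subgraph, IH].
Qed.

Lemma Delta_mono n m : n <= m -> sg_sub R (Delta n) (Delta m).
Proof.
  induction 1; [apply sg_sub_refl|]. eapply sg_sub_trans; [eassumption|]. split; simpl; auto.
Qed.

Lemma journey_Delta_S n u v g : R u v ->
  sg_sub R (journey_sg R g u) (Delta n) -> sg_sub R (journey_sg R g v) (Delta (S n)).
Proof.
  intros Huv Hu. pose proof (journey_sg_sub_start _ _ _ (Delta_is_subgraph n) _ _ Hu) as Vg.
  split; intros; simpl; right; exists u, v, g; auto.
Qed.

(* The symmetry of R lets journeys be transported in both directions. *)
Lemma bigunion_Delta_cR_closed : cQ_closed R R (sg_bigunion R Delta).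
Proof.
  assert (Htransfer : forall u v g, R u v ->
    sg_sub R (journey_sg R g u) (sg_bigunion R Delta) ->
    sg_sub R (journey_sg R g v) (sg_bigunion R Delta)).
  { intros u v g Huv Hu.
    destruct (journey_sg_bigunion _ _ _ Delta_is_subgraph Delta_mono _ _ Hu) as [N HN].
    eapply sg_sub_trans; [apply (journey_Delta_S N u v g Huv HN) | apply sub_bigunion]. }
  intros u v g h Huv _ _. unfold labels_journey.
  rewrite (gact_R _ _ g u v Huv).
  split; intros [Hend Hj]; split; eauto.
Qed.

Lemma Delta_sub_cR_closed D : is_subgraph R D -> cQ_closed R R D -> sg_sub R (wbar R w) D ->
  forall n, sg_sub R (Delta n) D.
Proof.
  intros HD Hc Hw. induction n as [|n IH]; [exact Hw|].
  assert (Hexp : forall u v h, R u v -> sg_sub R (journey_sg R h u) (Delta n) ->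
                   sg_sub R (journey_sg R h v) D).
  { intros u v h Huv Hu.
    apply (cQ_closed_journey _ _ D HD R u v h Hc Huv (gact_R _ _ h u v Huv)).
    eapply sg_sub_trans; eassumption. }
  destruct IH as [IHV IHE].
  split; simpl; [intros g | intros g a];
    (intros [H | [u [v [h [Huv [_ [Hu Hv]]]]]]]; [auto | apply (Hexp u v h Huv Hu), Hv]).
Qed.

Lemma bigunion_Delta_cR_closure : sg_eq R (sg_bigunion R Delta) (cQ_closure R R (wbar R w)).
Proof.
  split.
  - apply sub_cQ_closure. intros D HD Hc Hw. split; simpl.
    + intros g [i Hi]. apply (Delta_sub_cR_closed D HD Hc Hw i), Hi.
    + intros g a [i Hi]. apply (Delta_sub_cR_closed D HD Hc Hw i), Hi.
  - apply cQ_closure_least; [apply bigunion_is_subgraph, Delta_is_subgraph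
                            | apply bigunion_Delta_cR_closed | apply (sub_bigunion _ _ Delta 0)].
Qed.

End Expansion.

Theorem mainTheorem11 (X : Type) (R : imterm X -> imterm X -> Prop)
  (Rsym : forall u v, R u v -> R v u) (w : imterm X) :
  sg_eq R (FGamma R w) (cQ_closure R R (wbar R w)) /\
  sg_eq R (FGamma R w) (sg_bigunion R (Delta R w)).
Proof.
  split; [apply FGamma_cR_closure|].
  eapply sg_eq_trans;
    [apply FGamma_cR_closure | apply sg_eq_sym, bigunion_Delta_cR_closure, Rsym].
Qed.
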